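(* For every $n\ge 2$, the minimum size of a string attractor of the prefix $\mathbf{pd}[0..n-1]$ of the period-doubling sequence is $2$.
   Context: The period-doubling sequence $\mathbf{pd}=\mathtt{101110101011}\cdots$ is the infinite fixed point, starting with $1$, of the morphism $1\mapsto 10$, $0\mapsto 11$; it is indexed starting at $0$, and $\mathbf{pd}[0..n-1]$ is its length-$n$ prefix. A string attractor of a finite word $w=w[0..n-1]$ is a set $S\subseteq\{0,\ldots,n-1\}$ such that every nonempty factor $f$ of $w$ has an occurrence $w[p..q]=f$ with $p\le i\le q$ for some $i\in S$. *)

From mathcomp Require Import all_boot.
Set Implicit Arguments. Unset Strict Implicit. Unset Printing Implicit Defensive.

(* The period-doubling morphism 1 -> 10, 0 -> 11 (letters encoded as bool,
   true = 1, false = 0), extended to words. *)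
Definition pd_morph (b : bool) : seq bool := if b then [:: true; false] else [:: true; true].
Definition pd_morph_word (w : seq bool) : seq bool := flatten (map pd_morph w).

Definition pd_iter (k : nat) : seq bool := iter k pd_morph_word [:: true].

(* pd[i]: the i-th letter of the fixed point, read in h^(i+1)(1),
   which has length 2^(i+1) > i. *)
Definition pd (i : nat) : bool := nth false (pd_iter i.+1) i.

Definition pd_prefix (n : nat) : seq bool := mkseq pd n.

Definition factor_at (w : seq bool) (p q : nat) : seq bool := take (q - p).+1 (drop p w).

Definition string_attractor (w : seq bool) (S : {set 'I_(size w)}) : Prop :=
  forall i j, i <= j < size w ->
    exists p q (s : 'I_(size w)),
      [/\ p <= q < size w, factor_at w p q = factor_at w i j, s \in S & p <= s <= q].

Definition min_attractor_size (w : seq bool) (k : nat) : Prop :=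
  (exists S : {set 'I_(size w)}, string_attractor S /\ #|S| = k) /\
  (forall S : {set 'I_(size w)}, string_attractor S -> k <= #|S|).

From mathcomp Require Import all_boot zify.

Set Implicit Arguments. Unset Strict Implicit. Unset Printing Implicit Defensive.

(* The letter pd[i] is 0 exactly when the 2-adic valuation of i + 1 is odd.
   In a window [a, b] of positive integers, the element c of largest
   valuation e is the only multiple of 2^e, so translating the window by a
   multiple of 2^e preserves its letters, provided c lands on a multiple of
   2^e whose valuation has the parity of e.  For 4 2^h <= n < 8 2^h, the
   1-based positions 2^(h+1) and 3 2^h (if n < 6 2^h) or 4 2^h (otherwise)
   are reachable targets for every window; for n = 2, 3 positions 1 and 2
   suffice.  As both letters occur, a single position never does. *)

Lemma size_pd_morph_word w : size (pd_morph_word w) = (size w).*2.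
Proof. by elim: w => //= b w IH; rewrite size_cat IH; case: b. Qed.

Lemma nth_pd_morph_word_double w i :
  i < size w -> nth false (pd_morph_word w) i.*2 = true.
Proof.
rewrite /pd_morph_word.
by elim: w i => // b w IH [|i] /= lti; case: b => //=; apply: IH.
Qed.

Lemma nth_pd_morph_word_doubleS w i :
  i < size w -> nth false (pd_morph_word w) i.*2.+1 = ~~ nth false w i.
Proof.
rewrite /pd_morph_word.
by elim: w i => // b w IH [|i] /= lti; case: b => //=; apply: IH.
Qed.

Lemma pd_iterS k : pd_iter k.+1 = pd_morph_word (pd_iter k).
Proof. exact: iterS. Qed.

Lemma size_pd_iter k : size (pd_iter k) = 2 ^ k.
Proof.
by elim: k => // k IH; rewrite pd_iterS size_pd_morph_word IH expnS mul2n.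
Qed.

Lemma pd_iter_extends k : exists r, pd_iter k.+1 = pd_iter k ++ r.
Proof.
elim: k => [|k [r IH]]; first by exists [:: false].
exists (pd_morph_word r).
by rewrite pd_iterS [in LHS]IH /pd_morph_word map_cat flatten_cat.
Qed.

Lemma nth_pd_iter_leq k K i : k <= K -> i < 2 ^ k ->
  nth false (pd_iter K) i = nth false (pd_iter k) i.
Proof.
move=> /subnK <-; elim: (K - k) => // d IH lti.
have [r ->] := pd_iter_extends (d + k).
by rewrite nth_cat size_pd_iter (leq_trans lti) ?leq_exp2l ?leq_addl // IH.
Qed.

Lemma pdE k i : i < 2 ^ k -> pd i = nth false (pd_iter k) i.
Proof.
move=> lti; have lti1 : i < 2 ^ i.+1 by rewrite ltnW // ltn_expl.
rewrite /pd -(@nth_pd_iter_leq i.+1 (maxn i.+1 k)) ?leq_maxl //.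
exact: nth_pd_iter_leq (leq_maxr _ _) lti.
Qed.

Lemma pd_double i : pd i.*2 = true.
Proof.
have lti : i < 2 ^ i by exact: ltn_expl.
rewrite (@pdE i.+1) ?pd_iterS ?nth_pd_morph_word_double ?size_pd_iter //.
by rewrite expnS mul2n ltn_double.
Qed.

Lemma pd_doubleS i : pd i.*2.+1 = ~~ pd i.
Proof.
have lti : i < 2 ^ i by exact: ltn_expl.
rewrite (@pdE i.+1) ?pd_iterS ?nth_pd_morph_word_doubleS ?size_pd_iter -?pdE //.
by rewrite expnS mul2n ltn_Sdouble.
Qed.

Lemma logn2_odd m : odd m -> logn 2 m = 0.
Proof. by rewrite -coprime2n => /logn_coprime. Qed.

Lemma logn2_double m : 0 < m -> logn 2 m.*2 = (logn 2 m).+1.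
Proof. by move=> m0; rewrite -mul2n lognM // logn_prime. Qed.

Lemma pd_logn i : pd i = ~~ odd (logn 2 i.+1).
Proof.
elim/ltn_ind: i => i IH; rewrite -(odd_double_half i).
case: (boolP (odd i)) => /= oi.
  rewrite pd_doubleS IH; last by lia.
  by rewrite -doubleS logn2_double.
by rewrite pd_double logn2_odd //= odd_double.
Qed.

Lemma logn2_addr e m d :
  2 ^ e %| d -> ~~ (2 ^ e %| m) -> logn 2 (m + d) = logn 2 m.
Proof.
move=> dvd_d ndvd_m; have m_gt0 : 0 < m by case: m ndvd_m; rewrite ?dvdn0.
have lt_me : logn 2 m < e by rewrite ltnNge -pfactor_dvdn.
have dvd_d' k : k <= e -> 2 ^ k %| d.
  by move=> le_ke; apply: dvdn_trans dvd_d; rewrite dvdn_exp2l.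
have dvd_md : 2 ^ logn 2 m %| m + d.
  by rewrite dvdn_add ?pfactor_dvdnn ?dvd_d' 1?ltnW.
have ndvd_md : ~~ (2 ^ (logn 2 m).+1 %| m + d).
  by rewrite dvdn_addl ?dvd_d' // pfactor_dvdn // ltnn.
move: dvd_md ndvd_md; rewrite !pfactor_dvdn ?addn_gt0 ?m_gt0 //; lia.
Qed.

Lemma dvdn_double_between d u v :
  u < v -> d %| u -> d %| v -> exists2 z, u <= z <= v & 2 * d %| z.
Proof.
move=> lt_uv /dvdnP[p def_u] /dvdnP[q def_v]; subst u v.
have [d0 | d_gt0] := posnP d; first by rewrite d0 !muln0 in lt_uv.
rewrite ltn_mul2r d_gt0 /= in lt_uv.
exists ((p + odd p) * d); last by rewrite dvdn_pmul2r // dvdn2 oddD oddb addbb.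
by rewrite !leq_mul2r; lia.
Qed.

Lemma interval_max_valuation a b : 0 < a <= b ->
  exists2 c, a <= c <= b &
    forall m, a <= m <= b -> m != c -> ~~ (2 ^ logn 2 c %| m).
Proof.
move=> /andP[a_gt0 le_ab].
pose P e := has (fun m => 2 ^ e %| m) (index_iota a b.+1).
have inP m : (m \in index_iota a b.+1) = (a <= m <= b).
  by rewrite mem_index_iota ltnS.
have exP : exists e, P e.
  by exists 0; apply/hasP; exists a; rewrite ?inP ?leqnn ?le_ab ?dvd1n.
have boundP e : P e -> e <= b.
  case/hasP=> m; rewrite inP => /andP[le_am le_mb] dvd_m.
  have m_gt0 : 0 < m by apply: leq_trans le_am.
  have le_em : 2 ^ e <= m by apply: dvdn_leq.
  by rewrite ltnW // (leq_trans (ltn_expl e (ltnSn 1))) // (leq_trans le_em).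
have [e /hasP[c c_in dvd_c] max_e] := ex_maxnP exP boundP.
have c_gt0 : 0 < c by move: c_in; rewrite inP => /andP[/(leq_trans a_gt0)].
have logn_c : logn 2 c = e.
  apply/eqP; rewrite eqn_leq -pfactor_dvdn // dvd_c andbT.
  by apply: max_e; apply/hasP; exists c => //; apply: pfactor_dvdnn.
exists c; first by rewrite -inP.
move=> m m_in neq_mc; rewrite logn_c; apply/negP => dvd_m.
have no_two u v :
    u < v -> a <= u -> v <= b -> 2 ^ e %| u -> 2 ^ e %| v -> False.
  move=> lt_uv le_au le_vb dvd_u dvd_v.
  have [z /andP[le_uz le_zv] dvd_z] := dvdn_double_between lt_uv dvd_u dvd_v.
  have /max_e : P e.+1.
    apply/hasP; exists z; last by rewrite expnS.
    by rewrite inP (leq_trans le_au) ?(leq_trans le_zv).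
  by rewrite ltnn.
move: c_in m_in; rewrite inP => /andP[le_ac le_cb] /andP[le_am le_mb].
case: (ltngtP m c) => [lt_mc | lt_cm | eq_mc].
- exact: (no_two m c).
- exact: (no_two c m).
- by rewrite eq_mc eqxx in neq_mc.
Qed.

(* Positions are 1-based from here on, so that by [pd_logn] the letter at
   position m is ~~ odd (logn 2 m). *)
Definition copy_through (n s a b : nat) : Prop :=
  exists a', [/\ 0 < a', a' + (b - a) <= n, a' <= s <= a' + (b - a) &
    forall u, u <= b - a -> odd (logn 2 (a' + u)) = odd (logn 2 (a + u))].

Lemma copy_through_refl n s a b :
  0 < a -> a <= s <= b -> b <= n -> copy_through n s a b.
Proof. by move=> a_gt0 s_in le_bn; exists a; split=> //; lia. Qed.

Lemma copy_through_pivot n a b c t :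
  0 < a -> a <= c <= b ->
  (forall m, a <= m <= b -> m != c -> ~~ (2 ^ logn 2 c %| m)) ->
  0 < t -> 2 ^ logn 2 c %| t -> odd (logn 2 t) = odd (logn 2 c) ->
  t + 2 ^ logn 2 c <= n.+1 -> copy_through n t a b.
Proof.
set e := logn 2 c => a_gt0 /andP[le_ac le_cb] pivot t_gt0 dvd_t odd_t le_tn.
have dvd_c : 2 ^ e %| c by apply: pfactor_dvdnn.
have le_et : 2 ^ e <= t by apply: dvdn_leq.
have lt_ca : c - a < 2 ^ e.
  rewrite ltnNge; apply/negP => le_ea.
  have /negP[] := pivot (c - 2 ^ e) ltac:(lia) ltac:(lia).
  by rewrite dvdn_sub.
have lt_bc : b - c < 2 ^ e.
  rewrite ltnNge; apply/negP => le_eb.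
  have /negP[] := pivot (c + 2 ^ e) ltac:(lia) ltac:(lia).
  by rewrite dvdn_add.
exists (t - (c - a)); split; [lia | lia | lia |] => u le_u.
have [eq_c | neq_c] := eqVneq (a + u) c.
  by rewrite eq_c (_ : t - (c - a) + u = t) //; lia.
have ndvd := pivot (a + u) ltac:(lia) neq_c.
(* Translating by t - c, a multiple of 2^e, fixes the valuation of every
   other element of the window. *)
have [le_ct | lt_tc] := leqP c t.
  have dvd_tc : 2 ^ e %| t - c by rewrite dvdn_sub.
  have eq_u : t - (c - a) + u = a + u + (t - c).
    by clear -le_ct lt_ca le_et le_ac; lia.
  by rewrite eq_u (logn2_addr dvd_tc).
have dvd_ct : 2 ^ e %| c - t by rewrite dvdn_sub.
have eq_au : a + u = t - (c - a) + u + (c - t).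
  by clear -lt_tc lt_ca le_et le_ac; lia.
rewrite eq_au (logn2_addr dvd_ct) //.
by rewrite -(dvdn_addl _ dvd_ct) -eq_au.
Qed.

Lemma logn2_odd_mul o e : odd o -> logn 2 (o * 2 ^ e) = e.
Proof. by rewrite -coprime2n => /logn_Gauss ->; rewrite pfactorK. Qed.

Lemma logn2_4mul e : logn 2 (4 * 2 ^ e) = e.+2.
Proof. by rewrite -(expnD 2 2) pfactorK // add2n. Qed.

Lemma copy_through_down h n a b :
  3 * 2 ^ h < a <= 4 * 2 ^ h -> 4 * 2 ^ h <= b <= n -> n < 6 * 2 ^ h ->
  copy_through n (3 * 2 ^ h) a b.
Proof.
(* Shift by -2^h: the multiples 3, 4 and 5 of 2^h within reach all have
   valuations of the parity of h. *)
set H := 2 ^ h => /andP[lt_3a le_a4] /andP[le_4b le_bn] lt_n6.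
have H_gt0 : 0 < H by rewrite expn_gt0.
exists (a - H); split; [lia | lia | lia |] => u le_u.
rewrite (_ : a + u = a - H + u + H); last by lia.
have [/dvdnP[q def_m] | ndvd] := boolP (H %| a - H + u); last first.
  by rewrite (logn2_addr (dvdnn H)).
have : 2 * H < q * H < 5 * H by rewrite -def_m; lia.
rewrite !ltn_mul2r H_gt0 /= def_m.
by case: q {def_m} => [|[|[|[|[|q]]]]] // _;
  rewrite -mulSnr /H logn2_4mul logn2_odd_mul //= negbK.
Qed.

Lemma dvdn_lt_double d c : d %| c -> 0 < c < 2 * d -> c = d.
Proof.
case/dvdnP=> k ->; rewrite muln_gt0 ltn_mul2r.
by case: k => [|[|k]] /=; rewrite ?mul1n ?andbF.
Qed.

Lemma copy_through_main h n a b :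
  4 * 2 ^ h <= n < 8 * 2 ^ h -> 0 < a <= b -> b <= n ->
  copy_through n (2 * 2 ^ h) a b \/
  copy_through n (if n < 6 * 2 ^ h then 3 * 2 ^ h else 4 * 2 ^ h) a b.
Proof.
(* The targets have valuations h + 1 and h or h + 2, so one of them fits a
   pivot of valuation at most h + 1; a pivot of larger valuation is 4 2^h. *)
set H := 2 ^ h => /andP[le_4n lt_n8] ab le_bn.
have [c c_in pivot] := interval_max_valuation ab.
case/andP: ab c_in => a_gt0 le_ab c_in; have /andP[le_ac le_cb] := c_in.
have H_gt0 : 0 < H by rewrite expn_gt0.
set e := logn 2 c in pivot *.
have [le_eh1 | lt_h1e] := leqP e h.+1.
  have le_2e : 2 ^ e <= 2 * H by rewrite -expnS leq_exp2l.
  have [/eqP odd_e | odd_e] := boolP (odd e == odd h.+1).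
    left; apply: (copy_through_pivot a_gt0 c_in pivot); fold e.
    - by rewrite muln_gt0.
    - by rewrite -expnS dvdn_exp2l.
    - by rewrite -expnS pfactorK.
    - by rewrite (leq_trans (leq_add (leqnn _) le_2e)) //; lia.
  have le_eh : e <= h.
    by rewrite -ltnS ltn_neqAle le_eh1 andbT; apply: contraNneq odd_e => ->.
  have le_eH : 2 ^ e <= H by rewrite leq_exp2l.
  have odd_eh : odd e = odd h.
    by move: odd_e => /=; case: (odd e); case: (odd h).
  right; case: ifP => lt_n6; apply: (copy_through_pivot a_gt0 c_in pivot).
  all: rewrite -/e ?muln_gt0 ?dvdn_mull ?dvdn_exp2l //.
  - by rewrite logn2_odd_mul.
  - by lia.
  - by rewrite /H logn2_4mul /= negbK.
  - by move/negbT: lt_n6; lia.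
have c_eq : c = 4 * H.
  apply: dvdn_lt_double; last by apply/andP; split; lia.
  by rewrite (dvdn_trans _ (pfactor_dvdnn 2 c)) // -(expnD 2 2) dvdn_exp2l.
right; case: ifP => lt_n6; last by apply: copy_through_refl => //; lia.
have [le_a3 | lt_3a] := leqP a (3 * H).
  by apply: copy_through_refl => //; lia.
by apply: copy_through_down => //; lia.
Qed.

Lemma copy_through_small n a b :
  n < 4 -> 0 < a <= b -> b <= n ->
  copy_through n 1 a b \/ copy_through n 2 a b.
Proof.
move=> lt_n4 /andP[a_gt0 le_ab] le_bn.
have [le_a2 | lt_2a] := leqP a 2.
  by case: (a =P 1) => a1; [left | right]; apply: copy_through_refl => //; lia.
have [a3 b3] : a = 3 /\ b = 3 by lia.
left; exists 1; rewrite a3 b3 subnn; split=> // [|u]; first by lia.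
by rewrite leqn0 => /eqP ->.
Qed.

Lemma factor_atE w p q : p <= q < size w ->
  factor_at w p q = mkseq (fun u => nth false w (p + u)) (q - p).+1.
Proof.
move=> pq; have size_f : size (factor_at w p q) = (q - p).+1.
  by rewrite size_takel ?size_drop; lia.
apply: (@eq_from_nth _ false); rewrite size_f ?size_mkseq // => u lt_u.
by rewrite nth_take // nth_drop nth_mkseq.
Qed.

Lemma attractor_nth w (S : {set 'I_(size w)}) i :
  string_attractor S -> i < size w ->
  exists2 s : 'I_(size w), s \in S & nth false w s = nth false w i.
Proof.
move=> attS lt_i; have := attS i i; rewrite leqnn lt_i.
case=> // p [q [s [/andP[le_pq lt_q] eq_f s_in /andP[le_ps le_sq]]]].
rewrite !factor_atE ?leqnn ?le_pq // subnn in eq_f.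
have p_q : p = q by move: (congr1 size eq_f); rewrite !size_mkseq; lia.
exists s => //; have := congr1 (nth false ^~ 0) eq_f.
by rewrite !nth_mkseq // !addn0 => <-; congr nth; lia.
Qed.

Lemma attractor_card_gt1 w (S : {set 'I_(size w)}) i j :
  string_attractor S -> i < size w -> j < size w ->
  nth false w i != nth false w j -> 1 < #|S|.
Proof.
move=> attS lt_i lt_j neq_ij.
have [s s_in eq_s] := attractor_nth attS lt_i.
have [t t_in eq_t] := attractor_nth attS lt_j.
have neq_st : s != t.
  by apply: contraNneq neq_ij => eq_st; rewrite -eq_s -eq_t eq_st.
have sub : [set s; t] \subset S.
  by apply/subsetP => z; rewrite !inE => /orP[] /eqP ->.
by have := subset_leq_card sub; rewrite cards2 neq_st.
Qed.

Lemma pd_prefix_attractor n (S : {set 'I_(size (pd_prefix n))}) :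
  (forall a b, 0 < a <= b -> b <= n ->
    exists2 s : 'I_(size (pd_prefix n)), s \in S & copy_through n s.+1 a b) ->
  string_attractor S.
Proof.
move=> copies i j /andP[le_ij lt_j].
have lt_jn : j < n by rewrite size_mkseq in lt_j.
have [s s_in [a' [a'_gt0 le_n s_copy eq_copy]]] := copies i.+1 j.+1 le_ij lt_jn.
rewrite subSS in le_n s_copy eq_copy.
exists a'.-1, (a'.-1 + (j - i)), s; split=> //; try by rewrite ?size_mkseq; lia.
rewrite !factor_atE ?size_mkseq; try lia.
rewrite addKn /mkseq; apply/eq_in_map => u; rewrite mem_iota => /andP[_ lt_u].
rewrite !nth_mkseq ?pd_logn; try lia.
by rewrite -!addSn prednK // eq_copy.
Qed.

Lemma pd_prefix_two_attractor n s1 s2 :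
  0 < s1 < s2 -> s2 <= n ->
  (forall a b, 0 < a <= b -> b <= n ->
    copy_through n s1 a b \/ copy_through n s2 a b) ->
  exists S : {set 'I_(size (pd_prefix n))}, string_attractor S /\ #|S| = 2.
Proof.
move=> lt_s12 le_s2n copies.
have lt_s1 : s1.-1 < size (pd_prefix n) by rewrite size_mkseq; lia.
have lt_s2 : s2.-1 < size (pd_prefix n) by rewrite size_mkseq; lia.
exists [set Ordinal lt_s1; Ordinal lt_s2]; split.
  apply: pd_prefix_attractor => a b ab le_bn.
  have [copy | copy] := copies a b ab le_bn;
    [exists (Ordinal lt_s1) | exists (Ordinal lt_s2)];
    rewrite ?inE ?eqxx ?orbT //= prednK //; lia.
by rewrite cards2; case: eqP => // /(congr1 val) /=; lia.
Qed.

Theorem theorem3 (n : nat) : 2 <= n -> min_attractor_size (pd_prefix n) 2.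
Proof.
move=> le_2n; split; last first.
  move=> S /(attractor_card_gt1 (i := 0) (j := 1)); apply; rewrite ?size_mkseq.
  - exact: ltnW.
  - exact: le_2n.
  - by rewrite /pd_prefix !nth_mkseq ?pd_logn // ltnW.
have [lt_n4 | le_4n] := ltnP n 4.
  apply: (@pd_prefix_two_attractor n 1 2) => // a b.
  exact: copy_through_small.
have [h bracket] : exists h, 4 * 2 ^ h <= n < 8 * 2 ^ h.
  have le_2k := trunc_log_max (isT : 1 < 2) (le_4n : 2 ^ 2 <= n).
  have bounds := trunc_log_bounds (isT : 1 < 2) (leq_trans (isT : 0 < 4) le_4n).
  exists (trunc_log 2 n - 2).
  by rewrite -(expnD 2 2) subnKC // -(expnD 2 3) addSn subnKC.
have H_gt0 : 0 < 2 ^ h by rewrite expn_gt0.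
apply: (@pd_prefix_two_attractor n (2 * 2 ^ h)
          (if n < 6 * 2 ^ h then 3 * 2 ^ h else 4 * 2 ^ h)).
- by case: ifP; lia.
- by case: ifP; lia.
- by move=> a b; apply: copy_through_main.
Qed.
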